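(* Let $n\ge3$. The cycle graph on $n$ nodes is reachable (observable) from every pair of distinct nodes if and only if $n$ is prime.
   Context: The cycle graph on nodes $\{1,\dots,n\}$ has edges $\{i,(i\bmod n)+1\}$; its Laplacian $L$ has $2$ on the diagonal and $-1$ in entries $(i,j)$ with $j\equiv i\pm1\pmod n$. Reachable from a pair $\{i_1,i_2\}$ means that $(L,B)$ with $B=[e_{i_1}|e_{i_2}]$ is reachable (reachability matrix has rank $n$); observable means $(L,B^T)$ is observable. *)

From mathcomp Require Import all_boot all_order all_algebra.
Set Implicit Arguments. Unset Strict Implicit. Unset Printing Implicit Defensive.
Import Order.TTheory GRing.Theory Num.Theory.
Local Open Scope ring_scope.

(* Laplacian of the cycle graph on nodes 'I_n (node k here = node k+1 in the paper):
   2 on the diagonal, -1 at (i,j) with j = i +- 1 mod n, 0 elsewhere. *)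
Definition cycle_laplacian (R : nzRingType) (n : nat) : 'M[R]_n :=
  \matrix_(i < n, j < n)
    if i == j then 2%:R
    else if ((j : nat) == (i.+1 %% n)%N) || ((i : nat) == (j.+1 %% n)%N) then -1
    else 0.

Definition reach_mx (R : nzRingType) (n m : nat) (A : 'M[R]_n) (B : 'M[R]_(n, m))
  : 'M[R]_(n, \sum_(k < n) m) :=
  \mxrow_(k < n) (A ^+ k *m B).

Definition obs_mx (R : nzRingType) (n p : nat) (A : 'M[R]_n) (C : 'M[R]_(p, n))
  : 'M[R]_(\sum_(k < n) p, n) :=
  \mxcol_(k < n) (C *m A ^+ k).

Definition reachable (F : fieldType) (n m : nat) (A : 'M[F]_n) (B : 'M[F]_(n, m)) : bool :=
  \rank (reach_mx A B) == n.

Definition observable (F : fieldType) (n p : nat) (A : 'M[F]_n) (C : 'M[F]_(p, n)) : bool :=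
  \rank (obs_mx A C) == n.

Definition pair_input (R : nzRingType) (n : nat) (i1 i2 : 'I_n) : 'M[R]_(n, 1 + 1) :=
  row_mx (delta_mx i1 (0 : 'I_1)) (delta_mx i2 (0 : 'I_1)).

From mathcomp Require Import all_boot all_order all_algebra.
From mathcomp Require Import ring zify.
Set Implicit Arguments. Unset Strict Implicit. Unset Printing Implicit Defensive.
Import Order.TTheory GRing.Theory Num.Theory.
Local Open Scope ring_scope.

(* The Laplacian L is symmetric, so observability from a pair of nodes is
   reachability from it, and reachability fails exactly when some nonzero row
   vector w has all w L^k vanishing at both nodes. Such a w is antisymmetric
   about each node a, because the sums w L^k (a + i) + w L^k (a - i) solve a
   discrete wave equation with zero boundary values. Two reflections compose to
   a translation by 2(b - a), which generates Z/n when n is prime, so w = 0.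
   When n is composite, pick c > 2 dividing n and x <> 0 with c | 2x: the odd
   functions of the residue mod c form an L-invariant space of vectors vanishing
   at 0 and at x, and it is nonzero. *)

Section KrylovMatrices.
Variables (F : fieldType) (n p : nat).
Implicit Types (A : 'M[F]_n) (B : 'M[F]_(n, p)) (w : 'rV[F]_n).

Lemma trmx_exp A k : (A ^+ k)^T = A^T ^+ k.
Proof.
elim: k => [|k IHk]; first by rewrite !expr0 trmx1.
by rewrite exprS exprSr -!mulmxE trmx_mul IHk.
Qed.

Lemma tr_reach_mx A B : (reach_mx A B)^T = obs_mx A^T B^T.
Proof.
by rewrite tr_mxrow; apply: eq_mxcol => k; rewrite trmx_mul trmx_exp.
Qed.

Lemma observable_trE A B : observable A^T B^T = reachable A B.
Proof. by rewrite /observable -tr_reach_mx mxrank_tr. Qed.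

Lemma mul_reach_mx_eq0 A B w :
  w *m reach_mx A B = 0 <-> forall k, (k < n)%N -> w *m A ^+ k *m B = 0.
Proof.
rewrite /reach_mx mul_mxrow; split=> [wAB0 k lt_kn | wAB0].
  have := congr1 (fun M => submxrow M (Ordinal lt_kn)) wAB0.
  by rewrite mxrowK submxrow0 mulmxA.
by apply/mxrowP => k; rewrite mxrowK submxrow0 mulmxA wAB0.
Qed.

Lemma reachableP A B :
  reflect (forall w, (forall k, (k < n)%N -> w *m A ^+ k *m B = 0) -> w = 0)
          (reachable A B).
Proof.
apply: (iffP idP) => [free w /mul_reach_mx_eq0 wAB0 | inj].
  by apply: (row_free_inj free); rewrite mul0mx.
by apply: inj_row_free => w /mul_reach_mx_eq0; apply: inj.
Qed.

Lemma mul_pair_input_eq0 w (i1 i2 : 'I_n) :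
  w *m pair_input F i1 i2 = 0 <-> w 0 i1 = 0 /\ w 0 i2 = 0.
Proof.
have col_eq0 i : (w *m delta_mx i (0 : 'I_1) == 0) = (w 0 i == 0).
  by rewrite -colE; apply/eqP/eqP => [/matrixP/(_ 0 0)|wi0];
    [rewrite !mxE | apply/matrixP => r s; rewrite !ord1 !mxE].
rewrite /pair_input mul_mx_row; split.
  by move/eqP; rewrite row_mx_eq0 !col_eq0 => /andP[/eqP-> /eqP->].
by case=> wi1 wi2; apply/eqP; rewrite row_mx_eq0 !col_eq0 wi1 wi2 eqxx.
Qed.

End KrylovMatrices.

Lemma tr_cycle_laplacian (R : nzRingType) n :
  (cycle_laplacian R n)^T = cycle_laplacian R n.
Proof. by apply/matrixP => i j; rewrite !mxE eq_sym orbC. Qed.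

Lemma observable_cycle_pair (F : fieldType) n (a b : 'I_n) :
  observable (cycle_laplacian F n) (pair_input F a b)^T =
  reachable (cycle_laplacian F n) (pair_input F a b).
Proof. by rewrite -{1}tr_cycle_laplacian observable_trE. Qed.

Lemma composite_half_divisor n : (2 < n)%N -> ~~ prime n ->
  exists c x, [/\ (2 < c)%N, (c %| n)%N, (0 < x < n)%N & (c %| x.*2)%N].
Proof.
move=> n_gt2 n_npr; have n_gt1 : (1 < n)%N by apply: ltnW.
have [n_odd | n_even] := boolP (odd n).
  have p_pr := pdiv_prime n_gt1; have p_dvd := pdiv_dvd n.
  have p_neq2 : pdiv n != 2%N.
    by apply: contraTneq n_odd => p2; rewrite -dvdn2 -p2.
  have p_neqn : pdiv n != n by apply: contraNneq n_npr => <-.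
  have p_le := pdiv_leq (ltnW n_gt1); have p_gt1 := prime_gt1 p_pr.
  exists (pdiv n), (pdiv n); split=> //; last by rewrite -mul2n dvdn_mull.
    by rewrite ltn_neqAle eq_sym p_neq2.
  by rewrite ltnW // ltn_neqAle p_neqn.
exists n, n./2; split=> //.
  by rewrite half_gt0 n_gt1 ltn_half_double -addnn -{1}[n]addn0 ltn_add2l ltnW.
by rewrite -[X in (X %| _)%N](odd_double_half n) (negPf n_even).
Qed.

Lemma unitZp_prime p (z : 'Z_p) : prime p -> z != 0 -> z \is a GRing.unit.
Proof.
move=> p_pr nz_z; rewrite -(natr_Zp z) unitZpE ?prime_gt1 // prime_coprime //.
rewrite gtnNdvd // ?lt0n; first by move: nz_z; rewrite -val_eqE.
by rewrite -[X in (_ < X)%N](Zp_cast (prime_gt1 p_pr)).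
Qed.

Section CycleLaplacian.
Variables (F : fieldType) (m : nat).
Hypothesis two_neq0 : 2%:R != 0 :> F.
Local Notation n := m.+3.
Local Notation L := (cycle_laplacian F n).
Implicit Types (w : 'rV[F]_n) (a b x : 'I_n).

Lemma addrr_eq0 (y : F) : y + y = 0 -> y = 0.
Proof.
by move/eqP; rewrite -mulr2n -mulr_natr mulf_eq0 (negPf two_neq0) orbF => /eqP.
Qed.

Lemma cycle_laplacianE x a :
  L x a = 2%:R * (x == a)%:R - (x == a - 1)%:R - (x == a + 1)%:R.
Proof.
have neq_succ (y : 'I_n) : (y == y + 1) = false.
  by apply/negbTE; rewrite -{1}(addr0 y) (inj_eq (addrI y)) eq_sym oner_eq0.
have pred_succ : (a - 1 == a + 1) = false.
  rewrite eq_sym -subr_eq0 (_ : a + 1 - (a - 1) = 1 + 1) ?(-val_eqE) //; ring.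
rewrite mxE.
have -> : ((a : nat) == (x.+1 %% n)%N) = (x == a - 1).
  by rewrite [RHS]eq_sym subr_eq -val_eqE /= addn1.
have -> : ((x : nat) == (a.+1 %% n)%N) = (x == a + 1).
  by rewrite -val_eqE /= addn1.
case: (eqVneq x a) => [->|_].
  have neq_pred : (a == a - 1) = false by rewrite eq_sym subr_eq neq_succ.
  by rewrite neq_pred neq_succ /=; ring.
case: (eqVneq x (a - 1)) => [->|_]; first by rewrite pred_succ /=; ring.
by case: (x == a + 1) => /=; ring.
Qed.

Lemma mulmx_cycle_laplacian w a :
  (w *m L) 0 a = 2%:R * w 0 a - w 0 (a - 1) - w 0 (a + 1).
Proof.
have sum_delta (G : 'I_n -> F) b : \sum_x G x * (x == b)%:R = G b.
  rewrite (bigD1 b) //= eqxx mulr1 big1 ?addr0 // => x /negbTE->.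
  by rewrite mulr0.
rewrite mxE (eq_bigr (fun x => 2%:R * (w 0 x * (x == a)%:R)
  - w 0 x * (x == a - 1)%:R - w 0 x * (x == a + 1)%:R)) => [|x _].
  by rewrite !sumrB -mulr_sumr !sum_delta.
by rewrite cycle_laplacianE; ring.
Qed.

Lemma even_wave_eq0 (f : nat -> 'I_n -> F) :
  (forall k x, f k.+1 x = 2%:R * f k x - f k (x - 1) - f k (x + 1)) ->
  (forall k x, f k (- x) = f k x) ->
  (forall k, (k < n)%N -> f k 0 = 0) ->
  forall j k, (k + j < n)%N -> f k j%:R = 0.
Proof.
move=> f_step f_even f_0.
pose P j := forall k, (k + j < n)%N -> f k j%:R = 0.
suff P_pair j : P j /\ P j.+1 by move=> j; case: (P_pair j).
elim: j => [|j [IHj IHj1]]; split=> // k lt_kn.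
- by apply: f_0; rewrite -[k]addn0.
- have := f_step k 0.
  rewrite sub0r add0r f_even (f_0 k.+1) ?(f_0 k); try lia.
  rewrite mulr0 sub0r.
  by move/eqP; rewrite eq_sym -opprD oppr_eq0 => /eqP/addrr_eq0.
- have := f_step k j.+1%:R.
  rewrite -natr1 addrK natr1 natr1 (IHj1 k.+1) ?(IHj1 k) ?(IHj k); try lia.
  by rewrite mulr0 subr0 sub0r => /eqP; rewrite eq_sym oppr_eq0 => /eqP.
Qed.

Definition krylov_orth w a := forall k, (k < n)%N -> (w *m L ^+ k) 0 a = 0.

Lemma krylov_orth_reflect w a :
  krylov_orth w a -> forall x, w 0 x = - w 0 (a + a - x).
Proof.
move=> w_a x.
pose v k y := (w *m L ^+ k) 0 y.
have v_step k y : v k.+1 y = 2%:R * v k y - v k (y - 1) - v k (y + 1).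
  by rewrite /v exprSr mulmxA mulmx_cycle_laplacian.
pose f k y := v k (a + y) + v k (a - y).
have f_step k y : f k.+1 y = 2%:R * f k y - f k (y - 1) - f k (y + 1).
  rewrite /f !v_step (_ : a + y - 1 = a + (y - 1)); last by ring.
  rewrite (_ : a + y + 1 = a + (y + 1)); last by ring.
  rewrite (_ : a - y - 1 = a - (y + 1)); last by ring.
  by rewrite (_ : a - y + 1 = a - (y - 1)); [ring | ring].
have f_even k y : f k (- y) = f k y by rewrite /f opprK addrC.
have f_0 k : (k < n)%N -> f k 0 = 0.
  by move=> lt_kn; rewrite /f /v addr0 subr0 w_a // addr0.
have := @even_wave_eq0 f f_step f_even f_0 (x - a)%R 0 (ltn_ord _).
rewrite natr_Zp /f /v expr0 mulmx1 (addrC a) subrK.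
by move/eqP; rewrite addr_eq0 => /eqP->; rewrite opprB addrA.
Qed.

Lemma krylov_orth_pair_eq0 w a b :
  prime n -> a != b -> krylov_orth w a -> krylov_orth w b -> w = 0.
Proof.
move=> n_pr neq_ab /krylov_orth_reflect w_a /krylov_orth_reflect w_b.
have w_a0 : w 0 a = 0.
  by apply: addrr_eq0; rewrite {1}w_a addrK addNr.
(* The reflections about a and b compose to the translation by t = 2(b - a). *)
pose t := (b - a) + (b - a).
have w_per x : w 0 (x + t) = w 0 x.
  by rewrite [LHS]w_b [RHS]w_a; congr (- w 0 _); rewrite /t; ring.
have w_perk k x : w 0 (x + k%:R * t) = w 0 x.
  elim: k => [|k IHk]; first by rewrite mul0r addr0.
  by rewrite -natr1 mulrDl mul1r addrA w_per IHk.
have t_unit : t \is a GRing.unit.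
  rewrite (_ : t = (1 + 1) * (b - a)); last by rewrite /t; ring.
  rewrite unitrM; apply/andP; split; apply: (@unitZp_prime n) => //.
  by rewrite subr_eq0 eq_sym.
apply/rowP => x; rewrite mxE -w_a0.
have -> : x = a + (val ((x - a) / t))%:R * t.
  by rewrite natr_Zp divrK // addrC subrK.
by rewrite w_perk.
Qed.

Lemma reachable_pairP a b :
  reflect (forall w, krylov_orth w a -> krylov_orth w b -> w = 0)
          (reachable L (pair_input F a b)).
Proof.
apply: (iffP (reachableP _ _)) => [orth_eq0 w w_a w_b | orth_eq0 w wLB].
  by apply: orth_eq0 => k lt_kn; apply/mul_pair_input_eq0; rewrite w_a ?w_b.
by apply: orth_eq0 => k /wLB /mul_pair_input_eq0[].
Qed.

Lemma reachable_pair_prime a b :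
  prime n -> a != b -> reachable L (pair_input F a b).
Proof.
by move=> n_pr neq_ab; apply/reachable_pairP => w; apply: krylov_orth_pair_eq0.
Qed.

Section OddLift.
Variable c : nat.
Hypotheses (c_gt2 : (2 < c)%N) (c_dvd_n : (c %| n)%N).

Definition reduce x : 'Z_c := (val x)%:R.

Lemma reduceD x y : reduce (x + y) = reduce x + reduce y.
Proof.
rewrite /reduce -natrD; apply: ord_inj.
by rewrite !val_Zp_nat ?(ltn_trans _ c_gt2) //= modn_dvdm.
Qed.

Lemma reduceN x : reduce (- x) = - reduce x.
Proof. by apply/eqP; rewrite -addr_eq0 -reduceD addNr. Qed.

Lemma reduce1 : reduce 1 = 1.
Proof. by rewrite /reduce /= modn_small. Qed.

Definition odd_lift (u : 'rV[F]_n) :=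
  exists2 g : 'Z_c -> F, {morph g : y / - y} & forall x, u 0 x = g (reduce x).

Lemma odd_lift_mul u : odd_lift u -> odd_lift (u *m L).
Proof.
case=> g g_odd u_g.
exists (fun y => 2%:R * g y - g (y - 1) - g (y + 1)) => [y|x].
  by rewrite -(opprD y) [- y + 1]addrC -(opprB y) !g_odd; ring.
by rewrite mulmx_cycle_laplacian !u_g !reduceD reduceN reduce1.
Qed.

Lemma odd_lift_exp u k : odd_lift u -> odd_lift (u *m L ^+ k).
Proof.
move=> u_odd; elim: k => [|k IHk]; first by rewrite expr0 mulmx1.
by rewrite exprSr mulmxA; apply: odd_lift_mul.
Qed.

Lemma odd_lift_eq0 u x : odd_lift u -> (c %| x.*2)%N -> u 0 x = 0.
Proof.
case=> g g_odd u_g c_dvd_2x.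
have red_x : reduce x = - reduce x.
  apply/eqP; rewrite -addr_eq0 /reduce -natrD addnn; apply/eqP/ord_inj.
  by rewrite val_Zp_nat ?(ltn_trans _ c_gt2) //; apply/eqP.
by apply: addrr_eq0; rewrite u_g {1}red_x g_odd addNr.
Qed.

Definition odd_lift_witness : 'rV[F]_n :=
  \row_x ((reduce x == 1)%:R - (reduce x == -1)%:R).

Lemma odd_lift_witnessP : odd_lift odd_lift_witness.
Proof.
exists (fun y => (y == 1)%:R - (y == -1)%:R) => [y|x]; last by rewrite mxE.
by rewrite eqr_oppLR eqr_opp opprB.
Qed.

Lemma odd_lift_witness1 : odd_lift_witness 0 1 = 1.
Proof.
have one_neqN1 : (1 == -1 :> 'Z_c) = false.
  apply/negbTE; rewrite -addr_eq0 -mulr2n.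
  apply/eqP => /(congr1 (@nat_of_ord _)).
  by rewrite val_Zp_nat ?modn_small // (ltn_trans _ c_gt2).
by rewrite mxE reduce1 eqxx one_neqN1 subr0.
Qed.

Lemma not_reachable_divisor x :
  (c %| x.*2)%N -> ~~ reachable L (pair_input F 0 x).
Proof.
move=> c_dvd_2x; apply/reachable_pairP => /(_ odd_lift_witness).
have orth (y : 'I_n) : (c %| y.*2)%N -> krylov_orth odd_lift_witness y.
  move=> c_dvd_2y k _.
  exact: odd_lift_eq0 (odd_lift_exp k odd_lift_witnessP) c_dvd_2y.
move=> /(_ (orth 0 (dvdn0 c)) (orth x c_dvd_2x))/matrixP/(_ 0 1).
by rewrite odd_lift_witness1 mxE => /eqP; rewrite oner_eq0.
Qed.

End OddLift.

Lemma not_reachable_composite :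
  ~~ prime n -> exists a b, a != b /\ ~~ reachable L (pair_input F a b).
Proof.
move=> n_npr; have [c [x [c_gt2 c_dvd_n /andP[x_gt0 lt_xn] c_dvd_2x]]] :=
  composite_half_divisor (isT : (2 < n)%N) n_npr.
exists 0, (Ordinal lt_xn); split; first by rewrite -val_eqE /= eq_sym -lt0n.
exact: (@not_reachable_divisor _ c_gt2 c_dvd_n (Ordinal lt_xn) c_dvd_2x).
Qed.

End CycleLaplacian.

Theorem mainTheorem11 (R : realFieldType) (n : nat) (hn : (3 <= n)%N) :
  ((forall i1 i2 : 'I_n, i1 != i2 ->
      reachable (cycle_laplacian R n) (pair_input R i1 i2)) <-> prime n)
  /\
  ((forall i1 i2 : 'I_n, i1 != i2 ->
      observable (cycle_laplacian R n) (pair_input R i1 i2)^T) <-> prime n).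
Proof.
have two_neq0 : 2%:R != 0 :> R by rewrite pnatr_eq0.
case: n hn => [|[|[|m]]] // _.
have reachable_iff_prime : (forall i1 i2 : 'I_m.+3, i1 != i2 ->
    reachable (cycle_laplacian R m.+3) (pair_input R i1 i2)) <-> prime m.+3.
  split=> [all_reachable | n_pr i1 i2]; last exact: reachable_pair_prime.
  apply/idPn => /(not_reachable_composite two_neq0)[a [b [neq_ab]]].
  by rewrite all_reachable.
split=> //; rewrite -reachable_iff_prime.
by split=> all_reachable i1 i2 /all_reachable; rewrite observable_cycle_pair.
Qed.
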